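(* Let $(\bar A,\bar B=\mathbb I_m,\bar C=\mathbb I_p)$ be a structured system whose DAG of SCCs $\mathcal D_A$ is a hierarchical network, with feedback cost matrix $P$. If $\mathcal N_i$ and $\mathcal N_k$ are two distinct vertices of $\mathcal D_A$ in the same layer $L_f$, then $A(\mathcal N_i)\cap A(\mathcal N_k)=\emptyset$.
   Context: Dedicated: each column of $\bar B\in\{0,\star\}^{n\times m}$ and each row of $\bar C\in\{0,\star\}^{p\times n}$ has exactly one $\star$. Edges: $(x_j,x_i)$ iff $\bar A_{ij}=\star$, $(u_j,x_i)$ iff $\bar B_{ij}=\star$, $(x_j,y_i)$ iff $\bar C_{ij}=\star$. $\mathcal D_A$: vertices are the SCCs of the state digraph, with edges induced by edges between their states. Hierarchical network: a root with no incoming edge, every other vertex has exactly one parent. Layer $L_f$ = set of vertices at distance (number of edges of a shortest directed path) $f-1$ from the root. Ancestor/descendant via directed paths (including the vertex itself). For a vertex $\mathcal N$: $U(\mathcal N)$ = inputs with an edge into a state of an ancestor SCC of $\mathcal N$; $Y(\mathcal N)$ = outputs with an edge from a state of a descendant SCC of $\mathcal N$; $A(\mathcal N)=\{(y_j,u_i):y_j\in Y(\mathcal N),u_i\in U(\mathcal N)\}$. *)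

From mathcomp Require Import all_boot.
Set Implicit Arguments. Unset Strict Implicit. Unset Printing Implicit Defensive.

(* Abar i j = true  <->  \bar A_{ij} = star  <->  edge (x_j, x_i).
   Bbar i j = true  <->  \bar B_{ij} = star  <->  edge (u_j, x_i).
   Cbar i j = true  <->  \bar C_{ij} = star  <->  edge (x_j, y_i). *)

Definition state_edge n (Abar : 'I_n -> 'I_n -> bool) : rel 'I_n :=
  fun j i => Abar i j.

Definition scc_of n (Abar : 'I_n -> 'I_n -> bool) (x : 'I_n) : {set 'I_n} :=
  [set y | connect (state_edge Abar) x y && connect (state_edge Abar) y x].

Definition sccs n (Abar : 'I_n -> 'I_n -> bool) : {set {set 'I_n}} :=
  [set scc_of Abar x | x : 'I_n].

Definition dag_edge n (Abar : 'I_n -> 'I_n -> bool) : rel {set 'I_n} :=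
  fun S T => [&& S \in sccs Abar, T \in sccs Abar, S != T &
                 [exists x in S, exists y in T, state_edge Abar x y]].

Definition hierarchical_root n (Abar : 'I_n -> 'I_n -> bool) (r : {set 'I_n}) :=
  [/\ r \in sccs Abar,
      forall S, ~~ dag_edge Abar S r &
      forall N, N \in sccs Abar -> N != r ->
        #|[set S | dag_edge Abar S N]| = 1].

Definition hierarchical n (Abar : 'I_n -> 'I_n -> bool) :=
  exists r, hierarchical_root Abar r.

Definition dag_walk n (Abar : 'I_n -> 'I_n -> bool) (k : nat) (S T : {set 'I_n}) :=
  exists s : seq {set 'I_n}, [/\ size s = k, path (dag_edge Abar) S s & last S s = T].

(* N belongs to layer L_f, i.e. its distance from the root r is f-1 *)
Definition in_layer n (Abar : 'I_n -> 'I_n -> bool) (r : {set 'I_n}) (f : nat)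
  (N : {set 'I_n}) :=
  [/\ N \in sccs Abar, dag_walk Abar f.-1 r N &
      forall k, k < f.-1 -> ~ dag_walk Abar k r N].

Definition ancestor n (Abar : 'I_n -> 'I_n -> bool) (S N : {set 'I_n}) :=
  connect (dag_edge Abar) S N.

Definition Uset n m (Abar : 'I_n -> 'I_n -> bool) (Bbar : 'I_n -> 'I_m -> bool)
  (N : {set 'I_n}) : {set 'I_m} :=
  [set j : 'I_m | [exists S in sccs Abar,
       ancestor Abar S N && [exists i in S, Bbar i j]]].

Definition Yset n p (Abar : 'I_n -> 'I_n -> bool) (Cbar : 'I_p -> 'I_n -> bool)
  (N : {set 'I_n}) : {set 'I_p} :=
  [set i : 'I_p | [exists S in sccs Abar,
       ancestor Abar N S && [exists j in S, Cbar i j]]].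

Definition Aset n m p (Abar : 'I_n -> 'I_n -> bool) (Bbar : 'I_n -> 'I_m -> bool)
  (Cbar : 'I_p -> 'I_n -> bool) (N : {set 'I_n}) : {set 'I_p * 'I_m} :=
  setX (Yset Abar Cbar N) (Uset Abar Bbar N).

(* identity star pattern, \bar B = I_m (m = n), \bar C = I_p (p = n) *)
Definition id_pattern n : 'I_n -> 'I_n -> bool := fun i j => i == j.

From mathcomp Require Import all_boot.
Set Implicit Arguments. Unset Strict Implicit. Unset Printing Implicit Defensive.

(* Since B and C are identities, an output y is an output of a descendant of N
   exactly when the SCC of the state y descends from N.  In D_A every vertex has
   at most one parent and the root none, so D_A is an in-tree: walks are
   determined by their end point and length, and all walks from the root to a
   given vertex have the same length.  If y were an output of descendants of two
   vertices of the same layer, the two walks root -> N_i -> scc(y) and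
   root -> N_k -> scc(y) would have equal length, hence would coincide, forcing
   N_i = N_k. *)

Section InTree.
Variables (T : finType) (e : rel T) (r : T).
Hypothesis parent_uniq : forall X Y Z, e X Z -> e Y Z -> X = Y.
Hypothesis root_no_parent : forall S, ~~ e S r.

Lemma path_start_uniq (s s' : seq T) S S' :
  size s = size s' -> path e S s -> path e S' s' ->
  last S s = last S' s' -> S = S'.
Proof.
elim/last_ind: s s' S S' => [|s x IH] s' S S'; case/lastP: s' => [|s' x'];
  rewrite ?size_rcons ?rcons_path ?last_rcons //.
move=> [eq_size] /andP[p ex] /andP[p' ex'] eq_x; subst x'.
exact: IH eq_size p p' (parent_uniq ex ex').
Qed.

Lemma path_to_root_nil (s : seq T) S : path e S s -> last S s = r -> s = [::].
Proof.
case/lastP: s => [//|s x]; rewrite rcons_path last_rcons => /andP[_ ex] xr.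
by move: (root_no_parent (last S s)); rewrite -xr ex.
Qed.

(* The last [size s] steps of [s'] end where [s] does, so they start at [r];
   the remaining prefix of [s'] is then a walk back into the root. *)
Lemma root_path_size_uniq (s s' : seq T) :
  path e r s -> path e r s' -> last r s = last r s' -> size s = size s'.
Proof.
wlog le_ss' : s s' / size s <= size s'.
  move=> wlog_le p p' eq_last.
  by case: (leqP (size s) (size s')) => [|/ltnW] le; [apply: wlog_le | apply/esym/wlog_le].
move=> p p' eq_last; set d := size s' - size s.
have /andP[p_take p_drop] :
  path e r (take d s') && path e (last r (take d s')) (drop d s').
  by rewrite -cat_path cat_take_drop.
have size_drop_d : size s = size (drop d s') by rewrite size_drop subKn.
have start_r : r = last r (take d s').
  by apply: path_start_uniq size_drop_d p p_drop _; rewrite -last_cat cat_take_drop.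
have /(congr1 size) := path_to_root_nil p_take (esym start_r).
rewrite size_takel ?leq_subr // => d0.
by apply/eqP; rewrite eqn_leq le_ss' -subn_eq0 -/d d0.
Qed.

Lemma same_depth_connect_eq (s s' : seq T) Z :
  path e r s -> path e r s' -> size s = size s' ->
  connect e (last r s) Z -> connect e (last r s') Z -> last r s = last r s'.
Proof.
move=> p p' eq_size /connectP[a pa ->] /connectP[a' pa' eq_last].
have p_cat : path e r (s ++ a) by rewrite cat_path p pa.
have p_cat' : path e r (s' ++ a') by rewrite cat_path p' pa'.
have eq_last_cat : last r (s ++ a) = last r (s' ++ a') by rewrite !last_cat.
have /eqP := root_path_size_uniq p_cat p_cat' eq_last_cat.
rewrite !size_cat eq_size eqn_add2l => /eqP eq_size_a.
exact: path_start_uniq eq_size_a pa pa' eq_last.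
Qed.

End InTree.

Section HierarchicalNetwork.
Variables (n : nat) (Abar : 'I_n -> 'I_n -> bool).

Lemma scc_of_mem_eq x y : y \in scc_of Abar x -> scc_of Abar x = scc_of Abar y.
Proof.
rewrite inE => /andP[xy yx]; apply/setP => z; rewrite !inE.
apply/andP/andP => [[xz zx]|[yz zy]]; split.
- exact: connect_trans yx xz.
- exact: connect_trans zx xy.
- exact: connect_trans xy yz.
- exact: connect_trans zy yx.
Qed.

Lemma sccs_memE S x : S \in sccs Abar -> x \in S -> S = scc_of Abar x.
Proof. by case/imsetP=> x0 _ ->; apply: scc_of_mem_eq. Qed.

Lemma scc_of_refl x : x \in scc_of Abar x.
Proof. by rewrite inE connect0. Qed.

Lemma mem_Yset_id N y :
  (y \in Yset Abar (@id_pattern n) N) = ancestor Abar N (scc_of Abar y).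
Proof.
rewrite inE; apply/exists_inP/idP => [[S S_scc /andP[NS /exists_inP[x xS /eqP yx]]]|NS].
  by rewrite (sccs_memE S_scc xS) -yx in NS.
exists (scc_of Abar y); first exact: imset_f.
by rewrite NS; apply/exists_inP; exists y; rewrite ?scc_of_refl /id_pattern.
Qed.

Variable r : {set 'I_n}.
Hypothesis hier : hierarchical_root Abar r.

Lemma hierarchical_parent_uniq X Y Z :
  dag_edge Abar X Z -> dag_edge Abar Y Z -> X = Y.
Proof.
case: hier => _ root_no_parent in_deg1 eXZ eYZ.
have [Z_r|Z_r] := eqVneq Z r; first by move: (root_no_parent X); rewrite -Z_r eXZ.
have /and4P[_ Z_scc _ _] := eXZ.
have /eqP/cards1P[W parents_Z] := in_deg1 Z Z_scc Z_r.
have : X \in [set S | dag_edge Abar S Z] by rewrite inE.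
have : Y \in [set S | dag_edge Abar S Z] by rewrite inE.
by rewrite parents_Z !inE => /eqP-> /eqP->.
Qed.

Lemma Yset_id_layer_disjoint f Ni Nk :
  in_layer Abar r f Ni -> in_layer Abar r f Nk -> Ni != Nk ->
  [disjoint Yset Abar (@id_pattern n) Ni & Yset Abar (@id_pattern n) Nk].
Proof.
case: hier => _ root_no_parent _.
move=> [_ [s [size_s ps <-]] _] [_ [s' [size_s' ps' <-]] _] neq.
apply/pred0P => y /=; apply/negbTE/negP => /andP[].
rewrite !mem_Yset_id => anc anc'.
have := same_depth_connect_eq hierarchical_parent_uniq root_no_parent
  ps ps' (etrans size_s (esym size_s')) anc anc'.
by move/eqP; rewrite (negbTE neq).
Qed.

End HierarchicalNetwork.

Theorem corollary3 (n : nat) (Abar : 'I_n -> 'I_n -> bool) (r : {set 'I_n})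
  (f : nat) (Ni Nk : {set 'I_n}) :
  hierarchical_root Abar r ->
  in_layer Abar r f Ni -> in_layer Abar r f Nk -> Ni != Nk ->
  Aset Abar (@id_pattern n) (@id_pattern n) Ni
    :&: Aset Abar (@id_pattern n) (@id_pattern n) Nk = set0.
Proof.
move=> hier Li Lk neq.
have /pred0P disjY := Yset_id_layer_disjoint hier Li Lk neq.
apply/setP => [[y u]]; rewrite in_setI !in_setX in_set0 andbACA.
by have /= -> := disjY y.
Qed.
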